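(* Let $D$ be an integral domain of characteristic zero, let $S$ be a finite subset of $D$, and let $n$ be a positive integer. Then there exist arbitrarily large primes $p$ for which there is a ring homomorphism $\phi:\mathbb{Z}[S]\to\mathbb{Z}/p\mathbb{Z}$ such that (i) $\phi$ is injective on $S$, and (ii) for every $n\times n$ matrix $(s_{ij})$ with all entries $s_{ij}\in S$, $\det(s_{ij})=0$ if and only if $\det(\phi(s_{ij}))=0$.
   Context: All rings are commutative with identity $1$, and ring homomorphisms send $1$ to $1$. The subring of $D$ generated by $1$ is identified with $\mathbb{Z}$, and $\mathbb{Z}[S]$ denotes the smallest subring of $D$ containing $S$. *)

From HB Require Import structures.
From mathcomp Require Import all_boot all_order all_algebra.
Set Implicit Arguments. Unset Strict Implicit. Unset Printing Implicit Defensive.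
Import Order.TTheory GRing.Theory Num.Theory.
Local Open Scope ring_scope.

Definition in_ZS (D : comNzRingType) (S : seq D) (x : D) : Prop :=
  forall P : {pred D}, GRing.subring_closed P -> {subset S <= P} -> x \in P.

Definition ring_hom_on_ZS (D : comNzRingType) (R : nzRingType) (S : seq D)
    (phi : D -> R) : Prop :=
  [/\ phi 1 = 1,
      (forall x y, in_ZS S x -> in_ZS S y -> phi (x + y) = phi x + phi y),
      (forall x, in_ZS S x -> phi (- x) = - phi x) &
      (forall x y, in_ZS S x -> in_ZS S y -> phi (x * y) = phi x * phi y)].

From HB Require Import structures.
From mathcomp Require Import all_boot all_algebra all_field.
From mathcomp Require Import ring zify.
From Stdlib Require Import ClassicalEpsilon.
Set Implicit Arguments. Unset Strict Implicit. Unset Printing Implicit Defensive.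
Import GRing.Theory Num.Theory.
Local Open Scope ring_scope.

(* The
   product a of all nonzero n x n determinants with entries in S and of all
   nonzero differences of elements of S is a nonzero element of Z[S], and any
   homomorphism phi on Z[S] with phi a != 0 is injective on S and preserves the
   vanishing of these determinants.  It therefore suffices to show that a
   nonzero element of Z[S] survives some homomorphism Z[S] -> Z/p for
   arbitrarily large primes p.  This is done in two steps.
   1. Specialization into algC.  Adjoining the elements of S one by one to the
      image of Z, a homomorphism K -> algC that does not kill a given element
      extends to K[s]: send s to a root of the image of its minimal polynomial
      over K if s is algebraic over K, and to a suitable non-root otherwise.
   2. Reduction modulo p.  A finitely generated subring of algC lies in some
      Z[th][1/E] (primitive element theorem).  By Schur's theorem the integer
      minimal polynomial of th has a root k modulo arbitrarily large primes p,
      and th |-> k yields a homomorphism Z[th][1/E] -> Z/p; a Bezout identity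
      with the minimal polynomial shows that it does not kill a given element. *)

Definition asbool (P : Prop) : bool :=
  if excluded_middle_informative P then true else false.

Lemma asboolP (P : Prop) : reflect P (asbool P).
Proof. by rewrite /asbool; case: excluded_middle_informative => h; constructor. Qed.

Section SubringPredicates.
Variable R : comNzRingType.

(* A subring of R given by a propositional membership predicate; subrings
   such as K[s] = { f(s) | f in K[X] } are naturally described this way. *)
Definition subring_pred (K : R -> Prop) :=
  [/\ K 1, forall x y, K x -> K y -> K (x - y) & forall x y, K x -> K y -> K (x * y)].

Variable K : R -> Prop.
Hypothesis sK : subring_pred K.

Lemma subring1 : K 1. Proof. by case: sK. Qed.
Lemma subringB x y : K x -> K y -> K (x - y). Proof. by case: sK => _ h _; apply: h. Qed.
Lemma subringM x y : K x -> K y -> K (x * y). Proof. by case: sK => _ _ h; apply: h. Qed.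
Lemma subring0 : K 0. Proof. by rewrite -(subrr 1); apply: subringB; apply: subring1. Qed.
Lemma subringN x : K x -> K (- x).
Proof. by move=> kx; rewrite -sub0r; apply: subringB => //; apply: subring0. Qed.
Lemma subringD x y : K x -> K y -> K (x + y).
Proof. by move=> kx ky; rewrite -[y]opprK; apply: subringB => //; apply: subringN. Qed.
Lemma subringX x n : K x -> K (x ^+ n).
Proof. by move=> kx; elim: n => [|n IH]; [apply: subring1 | rewrite exprS; apply: subringM]. Qed.
Lemma subring_sum I r (P : pred I) F :
  (forall i, P i -> K (F i)) -> K (\sum_(i <- r | P i) F i).
Proof. by move=> h; apply: big_ind => //; [apply: subring0 | apply: subringD]. Qed.
Lemma subring_prod I r (P : pred I) F :
  (forall i, P i -> K (F i)) -> K (\prod_(i <- r | P i) F i).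
Proof. by move=> h; apply: big_ind => //; [apply: subring1 | apply: subringM]. Qed.
Lemma subring_sign (b : bool) : K ((-1) ^+ b).
Proof. by apply: subringX; apply: subringN; apply: subring1. Qed.

Lemma subring_det n (M : 'M[R]_n) : (forall i j, K (M i j)) -> K (\det M).
Proof.
move=> hM; apply: subring_sum => s _; apply: subringM; first exact: subring_sign.
by apply: subring_prod => i _.
Qed.

Definition poly_over (p : {poly R}) := forall i, K p`_i.

Lemma poly_over0 : poly_over 0.
Proof. by move=> i; rewrite coef0; apply: subring0. Qed.
Lemma poly_overC c : K c -> poly_over c%:P.
Proof. by move=> kc i; rewrite coefC; case: (i == 0)%N => //; apply: subring0. Qed.
Lemma poly_over1 : poly_over 1. Proof. by apply: poly_overC; apply: subring1. Qed.
Lemma poly_overXn n : poly_over 'X^n.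
Proof. by move=> i; rewrite coefXn; case: (i == n)%N; [apply: subring1 | apply: subring0]. Qed.
Lemma poly_overX : poly_over 'X. Proof. by rewrite -['X]expr1; apply: poly_overXn. Qed.
Lemma poly_overB p q : poly_over p -> poly_over q -> poly_over (p - q).
Proof. by move=> hp hq i; rewrite coefB; apply: subringB. Qed.
Lemma poly_overN p : poly_over p -> poly_over (- p).
Proof. by move=> hp i; rewrite coefN; apply: subringN. Qed.
Lemma poly_overD p q : poly_over p -> poly_over q -> poly_over (p + q).
Proof. by move=> hp hq i; rewrite coefD; apply: subringD. Qed.
Lemma poly_overM p q : poly_over p -> poly_over q -> poly_over (p * q).
Proof. by move=> hp hq i; rewrite coefM; apply: subring_sum => j _; apply: subringM. Qed.
Lemma poly_overZ c p : K c -> poly_over p -> poly_over (c *: p).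
Proof. by move=> kc hp i; rewrite coefZ; apply: subringM. Qed.
Lemma lead_coef_over p : poly_over p -> K (lead_coef p). Proof. by apply. Qed.

End SubringPredicates.

Lemma in_ZS_min (R : comNzRingType) (S : seq R) (K : R -> Prop) :
  subring_pred K -> (forall t, t \in S -> K t) -> forall x, in_ZS S x -> K x.
Proof.
move=> sK hS x hx; apply/asboolP; apply: (hx [pred y | asbool (K y)]).
- split.
  + by rewrite inE; apply/asboolP; apply: (subring1 sK).
  + by move=> u v; rewrite !inE => /asboolP ku /asboolP kv; apply/asboolP; apply: (subringB sK).
  + by move=> u v; rewrite !inE => /asboolP ku /asboolP kv; apply/asboolP; apply: (subringM sK).
- by move=> t ht; rewrite inE; apply/asboolP; apply: hS.
Qed.

Lemma subring_ZS (R : comNzRingType) (S : seq R) : subring_pred (in_ZS S).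
Proof.
split.
- by move=> P [h1 _ _] _.
- by move=> x y hx hy P hP hS; case: (hP) => _ hB _; apply: hB; [exact: hx | exact: hy].
- by move=> x y hx hy P hP hS; case: (hP) => _ _ hM; apply: hM; [exact: hx | exact: hy].
Qed.

Lemma in_ZS_mem (R : comNzRingType) (S : seq R) t : t \in S -> in_ZS S t.
Proof. by move=> ht P _ hS; apply: hS. Qed.

Section HomOn.
Variables (R T : comNzRingType) (K : R -> Prop) (f : R -> T).
Hypothesis sK : subring_pred K.

Definition hom_on :=
  [/\ f 1 = 1, forall x y, K x -> K y -> f (x + y) = f x + f y
   & forall x y, K x -> K y -> f (x * y) = f x * f y].

Hypothesis hf : hom_on.

Lemma hom1 : f 1 = 1. Proof. by case: hf. Qed.
Lemma homD x y : K x -> K y -> f (x + y) = f x + f y. Proof. by case: hf => _ h _; apply: h. Qed.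
Lemma homM x y : K x -> K y -> f (x * y) = f x * f y. Proof. by case: hf => _ _ h; apply: h. Qed.
Lemma hom0 : f 0 = 0.
Proof.
have k0 := subring0 sK; have := homD k0 k0; rewrite addr0 => h.
by apply: (addrI (f 0)); rewrite -h addr0.
Qed.
Lemma homN x : K x -> f (- x) = - f x.
Proof.
move=> kx; have := homD (subringN sK kx) kx; rewrite addNr hom0 => /eqP.
by rewrite eq_sym addr_eq0 => /eqP.
Qed.
Lemma homB x y : K x -> K y -> f (x - y) = f x - f y.
Proof. by move=> kx ky; rewrite homD ?homN //; apply: subringN. Qed.
Lemma homX x n : K x -> f (x ^+ n) = f x ^+ n.
Proof.
move=> kx; elim: n => [|n IH]; first by rewrite !expr0 hom1.
by rewrite !exprS homM ?IH //; apply: subringX.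
Qed.
Lemma hom_sign (b : bool) : f ((-1) ^+ b) = (-1) ^+ b.
Proof. by case: b; rewrite ?expr1 ?expr0 ?hom1 // homN ?hom1 //; apply: subring1. Qed.

Lemma hom_sum I r (P : pred I) F : (forall i, P i -> K (F i)) ->
  f (\sum_(i <- r | P i) F i) = \sum_(i <- r | P i) f (F i).
Proof.
move=> h; suff [] : K (\sum_(i <- r | P i) F i) /\
                    f (\sum_(i <- r | P i) F i) = \sum_(i <- r | P i) f (F i) by [].
apply: (big_ind2 (fun x y => K x /\ f x = y)).
- by split; [apply: subring0 | apply: hom0].
- by move=> x1 x2 y1 y2 [k1 e1] [k2 e2]; split; [apply: subringD | rewrite homD // e1 e2].
- by move=> i Pi; split => //; apply: h.
Qed.

Lemma hom_prod I r (P : pred I) F : (forall i, P i -> K (F i)) ->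
  f (\prod_(i <- r | P i) F i) = \prod_(i <- r | P i) f (F i).
Proof.
move=> h; suff [] : K (\prod_(i <- r | P i) F i) /\
                    f (\prod_(i <- r | P i) F i) = \prod_(i <- r | P i) f (F i) by [].
apply: (big_ind2 (fun x y => K x /\ f x = y)).
- by split; [apply: subring1 | apply: hom1].
- by move=> x1 x2 y1 y2 [k1 e1] [k2 e2]; split; [apply: subringM | rewrite homM // e1 e2].
- by move=> i Pi; split => //; apply: h.
Qed.

Lemma hom_det n (M : 'M[R]_n) : (forall i j, K (M i j)) -> f (\det M) = \det (map_mx f M).
Proof.
move=> hM; rewrite hom_sum => [|s _]; last first.
  by apply: (subringM sK); [exact: subring_sign | exact: subring_prod].
apply: eq_bigr => s _; rewrite homM ?hom_sign ?hom_prod //.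
- by congr (_ * _); apply: eq_bigr => i _; rewrite mxE.
- exact: subring_sign.
- exact: subring_prod.
Qed.

Lemma coef_map_on p i : (map_poly f p)`_i = f p`_i.
Proof. by rewrite coef_map_id0 // hom0. Qed.
Lemma map_poly_onC c : map_poly f c%:P = (f c)%:P.
Proof. by apply/polyP => i; rewrite coef_map_on !coefC; case: (i == 0)%N; rewrite ?hom0. Qed.
Lemma map_poly_onD p q : poly_over K p -> poly_over K q ->
  map_poly f (p + q) = map_poly f p + map_poly f q.
Proof. by move=> hp hq; apply/polyP => i; rewrite coefD !coef_map_on coefD homD. Qed.
Lemma map_poly_onB p q : poly_over K p -> poly_over K q ->
  map_poly f (p - q) = map_poly f p - map_poly f q.
Proof. by move=> hp hq; apply/polyP => i; rewrite coefB !coef_map_on coefB homB. Qed.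
Lemma map_poly_onM p q : poly_over K p -> poly_over K q ->
  map_poly f (p * q) = map_poly f p * map_poly f q.
Proof.
move=> hp hq; apply/polyP => i; rewrite coefM coef_map_on coefM hom_sum; last first.
  by move=> j _; apply: subringM.
by apply: eq_bigr => j _; rewrite homM // !coef_map_on.
Qed.
Lemma map_poly_onZ c p : K c -> poly_over K p -> map_poly f (c *: p) = f c *: map_poly f p.
Proof. by move=> kc hp; apply/polyP => i; rewrite coefZ !coef_map_on coefZ homM. Qed.

End HomOn.

Lemma hom_on_sub (R T : comNzRingType) (K1 K2 : R -> Prop) (f : R -> T) :
  (forall x, K1 x -> K2 x) -> hom_on K2 f -> hom_on K1 f.
Proof. by move=> h [h1 hD hM]; split => // x y kx ky; [apply: hD | apply: hM]; exact: h. Qed.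

Lemma hom_on_comp (R T U : comNzRingType) (K1 : R -> Prop) (K2 : T -> Prop)
    (f : R -> T) (g : T -> U) :
  hom_on K1 f -> hom_on K2 g -> (forall x, K1 x -> K2 (f x)) ->
  hom_on K1 (fun x => g (f x)).
Proof.
move=> hf hg hK; split.
- by rewrite (hom1 hf) (hom1 hg).
- by move=> x y kx ky; rewrite (homD hf) // (homD hg) //; apply: hK.
- by move=> x y kx ky; rewrite (homM hf) // (homM hg) //; apply: hK.
Qed.

(* A nonzero polynomial over a domain has only finitely many roots, so it
   does not vanish on the whole image of an injective sequence. *)
Lemma nonroot_in_seq (R : idomainType) (p : {poly R}) (f : nat -> R) :
  p != 0 -> injective f -> exists i, ~~ root p (f i).
Proof.
move=> nzp injf; apply/asboolP/negPn/negP => /asboolP H.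
have hall : all (root p) (map f (iota 0 (size p))).
  by apply/allP => x /mapP [i _ ->]; apply/negPn/negP => h; apply: H; exists i.
have := max_poly_roots nzp hall; rewrite map_inj_uniq ?iota_uniq // => /(_ isT).
by rewrite size_map size_iota ltnn.
Qed.

Lemma exists_min_size (R : nzRingType) (P : {poly R} -> Prop) :
  (exists p, P p) -> exists p, P p /\ forall q, P q -> (size p <= size q)%N.
Proof.
move=> [p0 Pp0]; pose J n := asbool (exists p, P p /\ size p = n).
have exJ : exists n, J n by exists (size p0); apply/asboolP; exists p0.
case: (ex_minnP exJ) => m /asboolP [p [Pp <-]] minm.
by exists p; split => // q Pq; apply: minm; apply/asboolP; exists q.
Qed.

Section PseudoDivision.
Variables (D : idomainType) (K : D -> Prop).
Hypothesis sK : subring_pred K.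

Lemma size_sub_lt (p q : {poly D}) : size p = size q -> lead_coef p = lead_coef q ->
  (0 < size p)%N -> (size (p - q)%R < size p)%N.
Proof.
move=> eqs eql pos.
have le : (size (p - q)%R <= size p)%N.
  by apply: leq_trans (size_polyD _ _) _; rewrite size_polyN -eqs maxnn.
rewrite ltn_neqAle le andbT; apply/eqP => eq.
have : lead_coef (p - q) = 0 by rewrite lead_coefE eq coefB {2}eqs -!lead_coefE eql subrr.
by move/eqP; rewrite lead_coef_eq0 => /eqP h; move: pos; rewrite -eq h size_poly0.
Qed.

Lemma pseudo_divide_step (g f : {poly D}) : poly_over K g -> poly_over K f ->
  g != 0 -> (size g <= size f)%N ->
  let d := (size f - size g)%N in
  poly_over K (lead_coef g *: f - (lead_coef f *: 'X^d) * g) /\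
  (size (lead_coef g *: f - (lead_coef f *: 'X^d) * g)%R < size f)%N.
Proof.
move=> kg kf nzg hge d.
have nzf : f != 0 by rewrite -size_poly_gt0; apply: leq_trans hge; rewrite size_poly_gt0.
have [lgnz lfnz] : lead_coef g != 0 /\ lead_coef f != 0 by rewrite !lead_coef_eq0.
split.
  apply: (poly_overB sK); first by apply: (poly_overZ sK) => //; apply: lead_coef_over.
  apply: (poly_overM sK) => //; apply: (poly_overZ sK); last exact: poly_overXn.
  exact: lead_coef_over.
have s2 : size ((lead_coef f *: 'X^d) * g) = size f.
  by rewrite -scalerAl size_scale // mulrC size_mulXn // /d subnK.
rewrite -[X in (_ < X)%N](size_scale f lgnz); apply: size_sub_lt; rewrite ?size_scale ?s2 //.
  by rewrite lead_coefZ -scalerAl lead_coefZ lead_coefM lead_coefXn mul1r mulrC.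
by rewrite size_poly_gt0.
Qed.

(* Pseudo-division in K[X]: lc(g)^k f = q g + r with q, r in K[X] and
   size r < size g; no division in K is needed. *)
Lemma pseudo_divide (g f : {poly D}) : poly_over K g -> g != 0 -> poly_over K f ->
  exists k q r, [/\ poly_over K q, poly_over K r, (size r < size g)%N &
                    lead_coef g ^+ k *: f = q * g + r].
Proof.
move=> kg nzg; have [n] := ubnP (size f); elim: n f => // n IH f /ltnSE szf kf.
have [hlt|hge] := ltnP (size f) (size g).
  exists 0%N, 0, f; split => //; first exact: poly_over0.
  by rewrite expr0 scale1r mul0r add0r.
have [kf' szf'] := pseudo_divide_step kg kf nzg hge.
set lg := lead_coef g; set lf := lead_coef f; set d := (size f - size g)%N in kf' szf'.
have [k [q [r [kq kr sr e]]]] := IH _ (leq_trans szf' szf) kf'.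
exists k.+1, (q + (lg ^+ k * lf) *: 'X^d), r; split => //.
  apply: (poly_overD sK) => //; apply: (poly_overZ sK); last exact: poly_overXn.
  by apply: (subringM sK); [apply: (subringX sK) | ]; apply: lead_coef_over.
rewrite mulrDl -addrA (addrC _ r) addrA -e scalerBr exprSr -scalerA.
by rewrite -!scalerAl !scalerA subrK.
Qed.

Definition adjoin (s : D) : D -> Prop := fun x => exists f, poly_over K f /\ x = f.[s].

Lemma subring_adjoin s : subring_pred (adjoin s).
Proof.
split.
- by exists 1; split; [apply: (poly_over1 sK) | rewrite hornerC].
- move=> x y [f [kf ->]] [g [kg ->]]; exists (f - g).
  by split; [apply: (poly_overB sK) | rewrite hornerD hornerN].
- move=> x y [f [kf ->]] [g [kg ->]]; exists (f * g).
  by split; [apply: (poly_overM sK) | rewrite hornerM].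
Qed.

Lemma adjoin_base s x : K x -> adjoin s x.
Proof. by move=> kx; exists x%:P; split; [apply: (poly_overC sK) | rewrite hornerC]. Qed.

Lemma adjoin_gen s : adjoin s s.
Proof. by exists 'X; split; [apply: (poly_overX sK) | rewrite hornerX]. Qed.

Lemma extend_hom (T : comNzRingType) (psi : D -> T) (s : D) (z : T) :
  hom_on K psi ->
  (forall h, poly_over K h -> h.[s] = 0 -> (map_poly psi h).[z] = 0) ->
  exists chi : D -> T, hom_on (adjoin s) chi /\
    forall f, poly_over K f -> chi f.[s] = (map_poly psi f).[z].
Proof.
move=> hpsi compat.
pose chi x := if excluded_middle_informative (adjoin s x) is left H
  then (map_poly psi (proj1_sig (constructive_indefinite_description _ H))).[z] else 0.
have chiE f : poly_over K f -> chi f.[s] = (map_poly psi f).[z].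
  move=> kf; rewrite /chi; case: excluded_middle_informative => [H|[]]; last by exists f.
  case: constructive_indefinite_description => f0 [kf0 e] /=.
  have := compat _ (poly_overB sK kf0 kf); rewrite hornerD hornerN e subrr => /(_ erefl).
  by rewrite (map_poly_onB sK hpsi) // hornerD hornerN => /eqP; rewrite subr_eq0 => /eqP.
exists chi; split => //; split.
- rewrite -(hornerC 1 s) chiE; last exact: (poly_over1 sK).
  by rewrite (map_poly_onC sK hpsi 1) hornerC (hom1 hpsi).
- move=> x y [f [kf ->]] [g [kg ->]].
  by rewrite -hornerD !chiE ?(map_poly_onD sK hpsi) ?hornerD //; apply: (poly_overD sK).
- move=> x y [f [kf ->]] [g [kg ->]].
  by rewrite -hornerM !chiE ?(map_poly_onM sK hpsi) ?hornerM //; apply: (poly_overM sK).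
Qed.

End PseudoDivision.

Section MinimalPolynomial.
Variables (D : idomainType) (K : D -> Prop) (s : D) (g : {poly D}).
Hypotheses (sK : subring_pred K) (kg : poly_over K g) (nzg : g != 0) (gs0 : g.[s] = 0)
  (gmin : forall h, poly_over K h -> h != 0 -> h.[s] = 0 -> (size g <= size h)%N).

Let lg := lead_coef g.
Let klg : K lg. Proof. exact: lead_coef_over. Qed.

Lemma minpoly_pdvd h : poly_over K h -> h.[s] = 0 ->
  exists k q, poly_over K q /\ lg ^+ k *: h = q * g.
Proof.
move=> kh hs; have [k [q [r [kq kr sr e]]]] := pseudo_divide sK kg nzg kh.
exists k, q; split => //; suff r0 : r = 0 by rewrite e r0 addr0.
apply/eqP; apply: contraTT sr => nzr; rewrite -leqNgt; apply: gmin => //.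
have := congr1 (horner^~ s) e; rewrite /= hornerZ hornerD hornerM gs0 hs.
by rewrite !mulr0 add0r => <-.
Qed.

Lemma minpoly_factor_const c q w : poly_over K q -> c != 0 ->
  c *: g = q * w -> w.[s] != 0 -> size w = 1%N.
Proof.
move=> kq cnz e ws.
have nzq : q != 0 by apply: contra_eqN e => /eqP ->; rewrite mul0r scale_poly_eq0 negb_or cnz.
have nzw : w != 0 by apply: contraNneq ws => ->; rewrite horner0.
have qs : q.[s] = 0.
  have := congr1 (horner^~ s) e; rewrite /= hornerZ hornerM gs0 mulr0 => /esym/eqP.
  by rewrite mulf_eq0 (negPf ws) orbF => /eqP.
have := gmin kq nzq qs; rewrite -(size_scale g cnz) e size_mul //.
have : (0 < size w)%N by rewrite size_poly_gt0.
case: (size w) => [|[|m]] // _.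
by rewrite addnS /= -[X in (_ <= X)%N]addn0 leq_add2l.
Qed.

Definition combination (r w : {poly D}) :=
  exists u v, [/\ poly_over K u, poly_over K v & w = u * g + v * r].

Lemma combination_over r w : poly_over K r -> combination r w -> poly_over K w.
Proof. by move=> kr [u [v [ku kv ->]]]; apply: (poly_overD sK); apply: (poly_overM sK). Qed.

Lemma min_combination r : poly_over K r -> r != 0 ->
  exists w, [/\ combination r w, w != 0, (size w <= size r)%N &
    forall w', combination r w' -> w' != 0 -> (size w <= size w')%N].
Proof.
move=> kr nzr.
have rcomb : combination r r.
  exists 0, 1; split; rewrite ?mul0r ?add0r ?mul1r //.
    exact: poly_over0.
  exact: (poly_over1 sK).
have [|w [[cw nzw] wmin]] := @exists_min_size _ (fun w => combination r w /\ w != 0).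
  by exists r.
by exists w; split => // [|w' cw' nzw']; apply: wmin.
Qed.

Lemma minpoly_bezout r : poly_over K r -> r.[s] != 0 -> (size r < size g)%N ->
  exists u v c, [/\ poly_over K u, poly_over K v, K c, c != 0 & u * g + v * r = c%:P].
Proof.
move=> kr rs sr.
have nzr : r != 0 by apply: contraNneq rs => ->; rewrite horner0.
have [w [[u [v [ku kv ew]]] nzw wr wmin]] := min_combination kr nzr.
have kw : poly_over K w by apply: combination_over kr _; exists u, v.
have [k [q [rho [kq krho srho e]]]] := pseudo_divide sK kw nzw kg.
set c := lead_coef w ^+ k in e.
have cnz : c != 0 by rewrite expf_neq0 // lead_coef_eq0.
have rho0 : rho = 0.
  apply/eqP; apply: contraTT srho => nzrho; rewrite -leqNgt; apply: wmin => //.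
  exists (c%:P - q * u), (- (q * v)); split.
  - apply: (poly_overB sK); last exact: (poly_overM sK).
    by apply: (poly_overC sK); apply: (subringX sK); apply: lead_coef_over.
  - by apply: (poly_overN sK); apply: (poly_overM sK).
  by rewrite -[rho](addKr (q * w)) -e ew mulrDr mulrBl mul_polyC !mulrA mulNr -addrA -opprD addrC.
have ws : w.[s] != 0.
  rewrite ew hornerD !hornerM gs0 mulr0 add0r; apply: contraTneq sr => vr0.
  rewrite -leqNgt; apply: (leq_trans _ wr); apply: gmin => //.
  by rewrite ew hornerD !hornerM gs0 mulr0 add0r.
have egw : c *: g = q * w by rewrite e rho0 addr0.
have [c' c'nz ec'] := size_poly1P _ (introT eqP (minpoly_factor_const kq cnz egw ws)).
exists u, v, c'; split => //; first by have := kw 0%N; rewrite ec' coefC.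
by rewrite -ew.
Qed.

Lemma root_compatible (T : idomainType) (psi : D -> T) (z : T) :
  hom_on K psi -> psi lg != 0 -> (map_poly psi g).[z] = 0 ->
  forall h, poly_over K h -> h.[s] = 0 -> (map_poly psi h).[z] = 0.
Proof.
move=> hpsi plg gz h kh hs; have [k [q [kq e]]] := minpoly_pdvd kh hs.
have := congr1 (fun p => (map_poly psi p).[z]) e.
have klgk : K (lg ^+ k) by apply: (subringX sK).
rewrite /= (map_poly_onZ sK hpsi) // (map_poly_onM sK hpsi) //.
rewrite hornerZ hornerM gz mulr0 (homX sK hpsi) // => /eqP.
by rewrite mulf_eq0 expf_eq0 (negPf plg) andbF => /eqP.
Qed.

Lemma extend_hom_algebraic f : poly_over K f -> f.[s] != 0 ->
  exists c, [/\ K c, c != 0 & forall psi : D -> algC, hom_on K psi -> psi c != 0 ->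
     exists chi : D -> algC, hom_on (adjoin K s) chi /\ chi f.[s] != 0].
Proof.
move=> kf fs; have [k [q [r [kq kr sr e]]]] := pseudo_divide sK kg nzg kf.
have rs : r.[s] = lg ^+ k * f.[s].
  by have := congr1 (horner^~ s) e; rewrite /= hornerZ hornerD hornerM gs0 mulr0 add0r.
have lgnz : lg != 0 by rewrite lead_coef_eq0.
have [|u [v [c [ku kv kc cnz euv]]]] := minpoly_bezout kr _ sr.
  by rewrite rs mulf_neq0 // expf_neq0.
exists (lg * c); split; [exact: (subringM sK) | exact: mulf_neq0 |].
move=> psi hpsi; rewrite (homM hpsi) // mulf_eq0 negb_or => /andP [plg pc].
have sg2 : (1 < size (map_poly psi g))%N.
  rewrite size_map_poly_id0 // ltnNge; apply/negP => /size1_polyC eg.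
  by move: gs0 nzg; rewrite eg hornerC => ->; rewrite eqxx.
have [z /eqP gz] : exists z, root (map_poly psi g) z.
  by apply/closed_rootP; rewrite neq_ltn sg2 orbT.
have [chi [hchi chiE]] := extend_hom sK hpsi (root_compatible hpsi plg gz).
exists chi; split => //; rewrite chiE //; apply/eqP => fz.
have klgk : K (lg ^+ k) by apply: (subringX sK).
have rz : (map_poly psi r).[z] = 0.
  have := congr1 (fun p => (map_poly psi p).[z]) e.
  rewrite /= (map_poly_onZ sK hpsi) // (map_poly_onD sK hpsi) //; last exact: (poly_overM sK).
  by rewrite (map_poly_onM sK hpsi) // hornerZ hornerD hornerM gz fz !mulr0 add0r.
have := congr1 (fun p => (map_poly psi p).[z]) euv.
have [kug kvr] := (poly_overM sK ku kg, poly_overM sK kv kr).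
rewrite /= (map_poly_onD sK hpsi) // !(map_poly_onM sK hpsi) //.
rewrite (map_poly_onC sK hpsi) hornerD !hornerM hornerC gz rz !mulr0 addr0.
by move=> /esym/eqP; rewrite (negPf pc).
Qed.

End MinimalPolynomial.

Section Specialization.
Variable D : idomainType.

Definition specializable (K : D -> Prop) :=
  forall a, K a -> a != 0 -> exists psi : D -> algC, hom_on K psi /\ psi a != 0.

(* Transcendental case of the specialization step: if no nonzero K-polynomial
   vanishes at s, send s to any algebraic number avoiding the roots of the
   image of f. *)
Lemma extend_hom_transcendental K s f (psi : D -> algC) : subring_pred K ->
  (forall h, poly_over K h -> h.[s] = 0 -> h = 0) ->
  poly_over K f -> hom_on K psi -> psi (lead_coef f) != 0 ->
  exists chi : D -> algC, hom_on (adjoin K s) chi /\ chi f.[s] != 0.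
Proof.
move=> sK transc kf hpsi plf.
have nzmf : map_poly psi f != 0 by rewrite -size_poly_gt0 size_map_poly_id0 // size_poly_gt0;
  apply: contraNneq plf => ->; rewrite lead_coef0 (hom0 sK hpsi).
have natC_inj : injective (fun i : nat => i%:R : algC).
  by move=> i j /eqP; rewrite eqr_nat => /eqP.
have [i zr] := nonroot_in_seq nzmf natC_inj.
have compat h : poly_over K h -> h.[s] = 0 -> (map_poly psi h).[i%:R] = 0.
  by move=> kh /(transc h kh) ->; rewrite map_poly0 horner0.
have [chi [hchi chiE]] := extend_hom sK hpsi compat.
by exists chi; split => //; rewrite chiE.
Qed.

Lemma specializable_adjoin K s : subring_pred K -> specializable K -> specializable (adjoin K s).
Proof.
move=> sK IH a [f [kf ->]] nza.
case: (asboolP (exists h, [/\ poly_over K h, h != 0 & h.[s] = 0])) => [alg | transc].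
  have [g [[kg nzg gs0] gmin]] := exists_min_size alg.
  have {}gmin h : poly_over K h -> h != 0 -> h.[s] = 0 -> (size g <= size h)%N.
    by move=> kh nzh hs; apply: gmin.
  have [c [kc cnz ext]] := extend_hom_algebraic sK kg nzg gs0 gmin kf nza.
  have [psi [hpsi pc]] := IH c kc cnz.
  exact: ext hpsi pc.
have nzf : f != 0 by apply: contraNneq nza => ->; rewrite horner0.
have lfnz : lead_coef f != 0 by rewrite lead_coef_eq0.
have [psi [hpsi plf]] := IH _ (lead_coef_over kf) lfnz.
apply: extend_hom_transcendental sK _ kf hpsi plf => h kh hs.
by apply/eqP/negPn/negP => nzh; apply: transc; exists h.
Qed.

Hypothesis hchar : [pchar D] =i pred0.

Definition int_image (x : D) := exists m : int, x = m%:~R.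

Lemma subring_int_image : subring_pred int_image.
Proof.
split.
- by exists 1; rewrite rmorph1.
- by move=> x y [m ->] [n ->]; exists (m - n); rewrite rmorphB.
- by move=> x y [m ->] [n ->]; exists (m * n); rewrite rmorphM.
Qed.

Lemma intr_inj_char0 : injective (intr : int -> D).
Proof.
move/pcharf0P: hchar => hc.
have intr_eq0 (z : int) : z%:~R = 0 :> D -> z = 0.
  case: z => k; rewrite ?NegzE ?mulrNz => /eqP; first by rewrite -pmulrn hc => /eqP ->.
  by rewrite oppr_eq0 hc.
move=> m n e; apply/eqP; rewrite -subr_eq0; apply/eqP/intr_eq0.
by rewrite rmorphB /= e subrr.
Qed.

Lemma specializable_int_image : specializable int_image.
Proof.
move=> a [m ->] nza.
pose psi x := if excluded_middle_informative (int_image x) is left H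
  then (proj1_sig (constructive_indefinite_description _ H))%:~R else 0 : algC.
have psiE (k : int) : psi k%:~R = k%:~R.
  rewrite /psi; case: excluded_middle_informative => [H|[]]; last by exists k.
  by case: constructive_indefinite_description => k0 /= /intr_inj_char0 <-.
exists psi; split.
- split.
  + by rewrite -(rmorph1 (intr : int -> D)) psiE rmorph1.
  + by move=> x y [m1 ->] [m2 ->]; rewrite -rmorphD !psiE rmorphD.
  + by move=> x y [m1 ->] [m2 ->]; rewrite -rmorphM !psiE rmorphM.
- by rewrite psiE intr_eq0; apply: contraNneq nza => ->; rewrite rmorph0.
Qed.

Fixpoint adjoin_seq (S : seq D) : D -> Prop :=
  if S is s :: S' then adjoin (adjoin_seq S') s else int_image.

Lemma subring_adjoin_seq S : subring_pred (adjoin_seq S).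
Proof. by elim: S => [|s S IH] /=; [exact: subring_int_image | exact: subring_adjoin]. Qed.

Lemma specializable_adjoin_seq S : specializable (adjoin_seq S).
Proof.
elim: S => [|s S IH] /=; first exact: specializable_int_image.
exact: specializable_adjoin (subring_adjoin_seq S) IH.
Qed.

Lemma specializable_ZS (S : seq D) : specializable (in_ZS S).
Proof.
have sub : forall x, in_ZS S x -> adjoin_seq S x.
  apply: in_ZS_min; first exact: subring_adjoin_seq.
  elim: S => [|s S IH] t //=; rewrite inE => /orP [/eqP -> | ht].
    exact: adjoin_gen (subring_adjoin_seq S) s.
  exact: adjoin_base (subring_adjoin_seq S) s _ (IH _ ht).
move=> a ha nza; have [psi [hpsi pa]] := specializable_adjoin_seq (sub _ ha) nza.
by exists psi; split => //; apply: hom_on_sub hpsi.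
Qed.

End Specialization.

(* If N! divides t and |t| >= 3, then t + 1 has a prime divisor above N:
   a prime p <= N would divide both t and t + 1. *)
Lemma large_prime_dvd_succ (N : nat) (t : int) :
  ((N`!)%:Z %| t)%Z -> (3 <= `|t|)%N -> exists2 p, prime p & (N < p)%N /\ (p%:Z %| t + 1)%Z.
Proof.
move=> dt t3.
have w1 : (1 < `|(t + 1)%R|)%N.
  case: t t3 {dt} => n /= t3; first by rewrite addn1 ltnS (leq_trans _ t3).
  rewrite NegzE (_ : - (Posz n.+1) + 1 = - (Posz n)) ?abszN; last first.
    by rewrite -addn1 PoszD opprD addrNK.
  by move: t3; rewrite /= !ltnS.
exists (pdiv `|(t + 1)%R|); first exact: pdiv_prime.
split; last by rewrite dvdzE pdiv_dvd.
rewrite ltnNge; apply/negP => pN.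
have : ((pdiv `|(t + 1)%R|)%:Z %| (t + 1 - t)%R)%Z.
  apply: rpredB; first by rewrite dvdzE pdiv_dvd.
  by apply: dvdz_trans dt; rewrite dvdzE /= dvdn_fact // prime_gt0 ?pdiv_prime.
rewrite addrAC subrr add0r dvdz1 /= => /eqP p1.
by have := prime_gt1 (pdiv_prime w1); rewrite p1.
Qed.

(* For H = G X + h0 with h0 != 0 and
   c = h0 N!, H(c m) = h0 (1 + N! m G(c m)), and the second factor has a
   prime divisor above N. *)
Lemma prime_dvd_poly_value (H : {poly int}) : (1 < size H)%N -> forall N : nat,
  exists p (k : int), [/\ prime p, (N < p)%N & (p%:Z %| H.[k])%Z].
Proof.
move=> sH N; set h0 := H.[0].
have [h00 | h0nz] := eqVneq h0 0.
  by have [p ltNp pp] := prime_above N; exists p, 0; split => //; rewrite -/h0 h00 dvdz0.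
have [G eG] : exists G, H = G * 'X + h0%:P.
  have /factor_theorem [G eG] : root (H - h0%:P) 0 by rewrite /root !hornerE subrr.
  by exists G; rewrite -[H](subrK h0%:P) eG subr0.
have nzG : G != 0.
  by apply: contraTneq sH => G0; rewrite eG G0 mul0r add0r -leqNgt size_polyC_leq1.
set c : int := h0 * (N`!)%:Z.
have cnz : c != 0 by rewrite mulf_neq0 // eqz_nat -lt0n fact_gt0.
have injc : injective (fun i : nat => c * (i + 3)%:Z).
  by move=> i j /(mulfI cnz) /eqP; rewrite eqz_nat eqn_add2r => /eqP.
have [i Gi] := nonroot_in_seq nzG injc.
set m := (i + 3)%N in Gi; set k := c * m%:Z in Gi.
set t := (N`!)%:Z * m%:Z * G.[k].
have dt : ((N`!)%:Z %| t)%Z by rewrite /t -mulrA dvdz_mulr.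
have t3 : (3 <= `|t|)%N.
  rewrite /t !abszM /= -mulnA -[3%N]mul1n leq_mul ?fact_gt0 //.
  by rewrite -[3%N]muln1 leq_mul ?leq_addl // lt0n absz_eq0; exact: Gi.
have [p pp [ltNp pt]] := large_prime_dvd_succ dt t3.
exists p, k; split => //.
suff -> : H.[k] = h0 * (t + 1) by apply: dvdz_mull.
by rewrite eG hornerD hornerMX hornerC /t /k /c mulrDr mulr1 mulrC !mulrA.
Qed.

Local Notation pZtoC := (map_poly (intr : int -> algC)).
Local Notation pQtoC := (map_poly (ratr : rat -> algC)).
Local Notation pZtoQ := (map_poly (intr : int -> rat)).

Lemma pZtoQtoC (F : {poly int}) : pQtoC (pZtoQ F) = pZtoC F.
Proof. by rewrite -map_poly_comp; apply: eq_map_poly => x /=; rewrite rmorph_int. Qed.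

Definition minQpoly (th : algC) : {poly rat} := sval (minCpolyP th).

Lemma minCpoly_minQpoly (th : algC) : minCpoly th = pQtoC (minQpoly th).
Proof. by rewrite /minQpoly; case: minCpolyP => P [eP mP] dP. Qed.

Lemma minQpoly_monic (th : algC) : minQpoly th \is monic.
Proof. by rewrite /minQpoly; case: minCpolyP => P [eP mP] dP. Qed.

Lemma root_minQpoly (th : algC) (q : {poly rat}) :
  root (pQtoC q) th = (minQpoly th %| q).
Proof. by rewrite /minQpoly; case: minCpolyP => P [eP mP] dP. Qed.

(* A rational polynomial that does not vanish at th is coprime to the
   (irreducible) minimal polynomial of th. *)
Lemma minQpoly_coprime (th : algC) (B : {poly rat}) :
  (pQtoC B).[th] != 0 -> coprimep (minQpoly th) B.
Proof.
move=> Bth; set P := minQpoly th.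
have nzP : P != 0 by apply/monic_neq0/minQpoly_monic.
have Prt : root (pQtoC P) th by rewrite -minCpoly_minQpoly root_minCpoly.
have irrP : irreducible_poly P.
  apply: (subfx_irreducibleP Prt nzP).1 => q qr nzq.
  by apply: dvdp_leq nzq _; rewrite -root_minQpoly.
apply/negPn/negP => hg; have eqg := irrP.2 _ hg (dvdp_gcdl P B).
by move: Bth; rewrite -[_ != 0]/(~~ root _ _) root_minQpoly -(eqp_dvdl B eqg) dvdp_gcdr.
Qed.

Definition zminpoly (th : algC) : {poly int} :=
  zprimitive (projT1 (rat_poly_scale (minQpoly th))).

Lemma minQpoly_zminpoly (th : algC) :
  exists2 lam : rat, lam != 0 & minQpoly th = lam *: pZtoQ (zminpoly th).
Proof.
rewrite /zminpoly; case: rat_poly_scale => Q [a anz eQ] /=.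
have nzQ : Q != 0.
  apply/eqP => Q0; have := monic_neq0 (minQpoly_monic th).
  by rewrite eQ Q0 map_poly0 scaler0 eqxx.
exists (a%:~R^-1 * (zcontents Q)%:~R).
  by rewrite mulf_neq0 ?invr_eq0 ?intr_eq0 ?zcontents_eq0.
by rewrite eQ {1}(zpolyEprim Q) linearZ /= scalerA.
Qed.

Lemma size_zminpoly (th : algC) : (1 < size (zminpoly th))%N.
Proof.
have [lam lamnz eP] := minQpoly_zminpoly th.
have := size_minCpoly th; rewrite minCpoly_minQpoly size_map_poly eP size_scale //.
by rewrite size_rat_int_poly => ->.
Qed.

(* Gauss: an integer polynomial vanishing at th is a multiple of zminpoly th in Z[X]. *)
Lemma zminpoly_dvd (th : algC) (F : {poly int}) :
  (pZtoC F).[th] = 0 -> exists r, F = zminpoly th * r.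
Proof.
move=> Fth; have [lam lamnz eP] := minQpoly_zminpoly th.
have : minQpoly th %| pZtoQ F by rewrite -root_minQpoly pZtoQtoC /root Fth.
rewrite eP dvdpZl // dvdp_rat_int => /dvdpP_int [r ->].
by exists r; rewrite zprimitive_id.
Qed.

Lemma int_bezout_of_rat (H B : {poly int}) (a b : {poly rat}) :
  a * pZtoQ H + b * pZtoQ B = 1 -> exists U V (M : int), M != 0 /\ U * H + V * B = M%:P.
Proof.
move=> e1; have [U [al alnz eU]] := rat_poly_scale a; have [V [be benz eV]] := rat_poly_scale b.
exists (be *: U), (al *: V), (al * be); split; first by rewrite mulf_neq0.
apply: (@map_inj_poly _ _ (intr : int -> rat)); [exact: intr_inj | exact: rmorph0 |].
rewrite rmorphD !rmorphM /= !map_polyZ map_polyC /=.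
have := congr1 (fun x => (al * be)%:~R *: x) e1; rewrite /= eU eV scalerDr.
rewrite -!scalerAl !scalerA.
have -> : (al * be)%:~R / al%:~R = be%:~R :> rat by rewrite rmorphM /= mulrC mulKf ?intr_eq0.
have -> : (al * be)%:~R / be%:~R = al%:~R :> rat by rewrite rmorphM /= mulfK ?intr_eq0.
by move=> ->; rewrite map_polyC -polyCM -rmorphM alg_polyC.
Qed.

Lemma zminpoly_bezout (th : algC) (B : {poly int}) : (pZtoC B).[th] != 0 ->
  exists U V (M : int), M != 0 /\ U * zminpoly th + V * B = M%:P.
Proof.
move=> Bth; have [lam lamnz eP] := minQpoly_zminpoly th.
have cop : coprimep (minQpoly th) (pZtoQ B) by apply: minQpoly_coprime; rewrite pZtoQtoC.
have [[u v] /= huv] := Bezout_coprimepP _ _ cop.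
have [c cnz ec] : exists2 c, c != 0 & u * minQpoly th + v * pZtoQ B = c%:P.
  by apply/size_poly1P; rewrite size_poly_eq1.
apply: (@int_bezout_of_rat _ _ ((c^-1 * lam) *: u) (c^-1 *: v)).
have := congr1 (fun x => c^-1 *: x) ec; rewrite /= scalerDr eP.
rewrite -!scalerAl -scalerAr !scalerA => ->.
by rewrite -mul_polyC -polyCM mulVf.
Qed.

(* The ring Z[th][1/E] of algebraic numbers x with x E^j = F(th) for some
   j and some integer polynomial F. *)
Definition localized (th : algC) (E : int) (x : algC) :=
  exists jF : nat * {poly int}, x * E%:~R ^+ jF.1 = (pZtoC jF.2).[th].

Lemma pZtoC_mulC (th : algC) (c : int) F : (pZtoC (c%:P * F)).[th] = c%:~R * (pZtoC F).[th].
Proof. by rewrite rmorphM /= map_polyC hornerM hornerC. Qed.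

Lemma subring_localized th E : subring_pred (localized th E).
Proof.
split.
- by exists (0%N, 1); rewrite expr0 mulr1 rmorph1 hornerC.
- move=> x y [[j1 F1] /= h1] [[j2 F2] /= h2].
  exists ((j1 + j2)%N, (E ^+ j2)%:P * F1 - (E ^+ j1)%:P * F2) => /=.
  by rewrite rmorphB /= hornerD hornerN !pZtoC_mulC -h1 -h2 !rmorphXn /= exprD; ring.
- move=> x y [[j1 F1] /= h1] [[j2 F2] /= h2].
  exists ((j1 + j2)%N, F1 * F2) => /=.
  by rewrite rmorphM /= hornerM -h1 -h2 exprD; ring.
Qed.

(* By the primitive element theorem a finite set of algebraic numbers lies
   in Q(th) = Q[th], hence in some Z[th][1/E]. *)
Lemma localized_primitive (T : seq algC) :
  exists th (E : int), E != 0 /\ forall t, t \in T -> localized th E t.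
Proof.
have [th _ [ps eT]] := algC_PET T.
pose den (q : {poly rat}) : int := sval (projT2 (rat_poly_scale q)).
pose num (q : {poly rat}) : {poly int} := projT1 (rat_poly_scale q).
have denP q : den q != 0 /\ q = (den q)%:~R^-1 *: pZtoQ (num q).
  by rewrite /den /num; case: (rat_poly_scale q) => F [a anz ea].
exists th, (\prod_(q <- ps) den q); split.
  by rewrite prodf_seq_neq0; apply/allP => q _; case: (denP q).
move=> t; rewrite eT => /mapP [q qin ->]; have [dnz eq] := denP q.
have qth : (pQtoC q).[th] = (den q)%:~R^-1 * (pZtoC (num q)).[th].
  by rewrite {1}eq map_polyZ /= pZtoQtoC hornerZ fmorphV rmorph_int.
exists (1%N, (\prod_(q' <- rem q ps) den q')%:P * num q) => /=.
rewrite pZtoC_mulC expr1 qth (perm_big _ (perm_to_rem qin)) big_cons rmorphM /=.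
by field; rewrite intr_eq0.
Qed.

Lemma intr_Zp_eq0 (p : nat) (z : int) : prime p -> ((z%:~R : 'Z_p) == 0) = (p%:Z %| z)%Z.
Proof.
move=> pp; have pZ : p \in [pchar 'Z_p] by rewrite inE pp /= pchar_Zp ?prime_gt1.
by rewrite (dvdz_pcharf pZ).
Qed.

Lemma intr_Zp_unit (p : nat) (z : int) : prime p -> ~~ (p %| `|z|)%N ->
  (z%:~R : 'Z_p) \is a GRing.unit.
Proof.
move=> pp; case: z => n /= h; rewrite ?NegzE ?mulrNz ?unitrN -pmulrn.
  by rewrite unitZpE ?prime_gt1 // prime_coprime.
by rewrite unitZpE ?prime_gt1 // prime_coprime.
Qed.

Section ReductionModP.
(* Reduction of Z[th][1/E] modulo a prime p above E at which the minimal
   polynomial of th has an integer root k: send th to k. *)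
Variables (p : nat) (th : algC) (E k : int).
Hypotheses (pp : prime p) (Ep : ~~ (p %| `|E|)%N) (Hk : (p%:Z %| (zminpoly th).[k])%Z).

Definition eval_mod (F : {poly int}) : 'Z_p := (F.[k])%:~R.

Lemma eval_modD F G : eval_mod (F + G) = eval_mod F + eval_mod G.
Proof. by rewrite /eval_mod hornerD rmorphD. Qed.
Lemma eval_modB F G : eval_mod (F - G) = eval_mod F - eval_mod G.
Proof. by rewrite /eval_mod hornerD hornerN rmorphB. Qed.
Lemma eval_modM F G : eval_mod (F * G) = eval_mod F * eval_mod G.
Proof. by rewrite /eval_mod hornerM rmorphM. Qed.
Lemma eval_modC c : eval_mod c%:P = c%:~R.
Proof. by rewrite /eval_mod hornerC. Qed.

(* The kernel of F |-> F(th) is killed: those F are multiples of zminpoly th. *)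
Lemma eval_mod_root F : (pZtoC F).[th] = 0 -> eval_mod F = 0.
Proof.
case/zminpoly_dvd => r ->; rewrite eval_modM.
suff /eqP -> : eval_mod (zminpoly th) == 0 by rewrite mul0r.
by rewrite intr_Zp_eq0.
Qed.

Let e : 'Z_p := E%:~R.
Let eXu j : e ^+ j \is a GRing.unit.
Proof. by rewrite unitrX // intr_Zp_unit. Qed.

Definition reduce (x : algC) : 'Z_p :=
  if excluded_middle_informative (localized th E x) is left h then
    let jF := proj1_sig (constructive_indefinite_description _ h) in eval_mod jF.2 / e ^+ jF.1
  else 0.

Lemma reduceE x j F : x * E%:~R ^+ j = (pZtoC F).[th] -> reduce x = eval_mod F / e ^+ j.
Proof.
move=> hx; rewrite /reduce; case: excluded_middle_informative => [h|[]]; last by exists (j, F).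
case: constructive_indefinite_description => [[j0 F0]] /= h0.
set G := (E ^+ j)%:P * F0 - (E ^+ j0)%:P * F.
have : (pZtoC G).[th] = 0.
  by rewrite /G rmorphB /= hornerD hornerN !pZtoC_mulC -h0 -hx !rmorphXn /=; ring.
move/eval_mod_root/eqP; rewrite /G eval_modB !eval_modM !eval_modC !rmorphXn subr_eq0 /= -/e.
move=> /eqP eG; apply: (mulIr (eXu j0)); apply: (mulIr (eXu j)).
by rewrite divrK // mulrAC divrK // mulrC eG mulrC.
Qed.

Lemma reduce_neq0 x j F : x * E%:~R ^+ j = (pZtoC F).[th] -> eval_mod F != 0 ->
  reduce x != 0.
Proof.
move=> hx; rewrite (reduceE hx); apply: contraNneq => h0.
by rewrite -(divrK (eXu j) (eval_mod F)) h0 mul0r.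
Qed.

Lemma reduce_hom : hom_on (localized th E) reduce.
Proof.
split.
- rewrite (@reduceE 1 0 1); first by rewrite eval_modC expr0 divr1.
  by rewrite expr0 mulr1 rmorph1 hornerC.
- move=> x y [[j1 F1] /= h1] [[j2 F2] /= h2].
  rewrite (reduceE h1) (reduceE h2).
  rewrite (@reduceE _ (j1 + j2) ((E ^+ j2)%:P * F1 + (E ^+ j1)%:P * F2)); last first.
    by rewrite rmorphD /= hornerD !pZtoC_mulC -h1 -h2 !rmorphXn /= exprD; ring.
  rewrite eval_modD !eval_modM !eval_modC !rmorphXn /= -/e exprD invrM // mulrDl.
  have cancel_unit (u a v : 'Z_p) : u \is a GRing.unit -> u * a * (u^-1 * v) = a * v.
    by move=> uu; rewrite mulrACA divrr // mul1r.
  by rewrite cancel_unit // [X in _ + _ * X]mulrC cancel_unit.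
- move=> x y [[j1 F1] /= h1] [[j2 F2] /= h2].
  rewrite (reduceE h1) (reduceE h2) (@reduceE _ (j1 + j2) (F1 * F2)); last first.
    by rewrite rmorphM /= hornerM -h1 -h2 exprD mulrACA.
  by rewrite eval_modM exprD invrM //; ring.
Qed.

Lemma eval_mod_bezout U V B (M : int) : ~~ (p %| `|M|)%N ->
  U * zminpoly th + V * B = M%:P -> eval_mod B != 0.
Proof.
move=> Mp eUV; have evH : eval_mod (zminpoly th) = 0 by apply/eqP; rewrite intr_Zp_eq0.
have := congr1 eval_mod eUV; rewrite eval_modD !eval_modM eval_modC evH mulr0 add0r.
move=> evVB; apply/eqP => B0; move: Mp.
by rewrite -[p in (p %| _)%N]/(`|p%:Z|%N) -dvdzE -intr_Zp_eq0 // -evVB B0 mulr0 eqxx.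
Qed.

End ReductionModP.

Lemma large_prime_ndvd (p : nat) (z : int) : z != 0 -> (`|z| < p)%N -> ~~ (p %| `|z|)%N.
Proof.
move=> nz lt; apply/negP => /dvdn_leq; rewrite absz_gt0 => /(_ nz).
by rewrite leqNgt lt.
Qed.

Lemma reduce_mod_p (T : seq algC) (b : algC) (N : nat) : in_ZS T b -> b != 0 ->
  exists p, [/\ prime p, (N < p)%N &
    exists chi : algC -> 'Z_p, hom_on (in_ZS T) chi /\ chi b != 0].
Proof.
move=> hb nzb.
have [th [E [Enz hT]]] := localized_primitive T.
have inR := in_ZS_min (subring_localized th E) hT.
have [[j B] /= hbB] := inR _ hb.
have Bth : (pZtoC B).[th] != 0 by rewrite -hbB mulf_neq0 // expf_neq0 // intr_eq0.
have [U [V [M [Mnz eUV]]]] := zminpoly_bezout Bth.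
have [p [k [pp ltp pk]]] := prime_dvd_poly_value (size_zminpoly th) (N + `|E| + `|M|).
have Ep : ~~ (p %| `|E|)%N by apply: large_prime_ndvd => //; lia.
have Mp : ~~ (p %| `|M|)%N by apply: large_prime_ndvd => //; lia.
exists p; split => //; first lia.
exists (reduce p th E k); split; first exact: hom_on_sub inR (reduce_hom pp Ep pk).
exact: reduce_neq0 hbB (eval_mod_bezout pp pk Mp eUV).
Qed.

Lemma hom_image_ZS (R T : comNzRingType) (S : seq R) (psi : R -> T) :
  hom_on (in_ZS S) psi -> forall x, in_ZS S x -> in_ZS (map psi S) (psi x).
Proof.
move=> hpsi x hx; have sS := subring_ZS S; have sT := subring_ZS (map psi S).
suff : in_ZS S x /\ in_ZS (map psi S) (psi x) by case.
move: x hx; apply: in_ZS_min.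
  split.
  - by split; [apply: (subring1 sS) | rewrite (hom1 hpsi); apply: (subring1 sT)].
  - move=> u v [su tu] [sv tv]; split; first exact: (subringB sS).
    by rewrite (homB sS hpsi) //; apply: (subringB sT).
  - move=> u v [su tu] [sv tv]; split; first exact: (subringM sS).
    by rewrite (homM hpsi) //; apply: (subringM sT).
by move=> t ht; split; apply: in_ZS_mem => //; apply: map_f.
Qed.

Lemma specialize_mod_p (D : idomainType) (S : seq D) (a : D) (N : nat) :
  [pchar D] =i pred0 -> in_ZS S a -> a != 0 ->
  exists p, [/\ prime p, (N < p)%N &
    exists phi : D -> 'Z_p, hom_on (in_ZS S) phi /\ phi a != 0].
Proof.
move=> hchar ha nza.
have [psi [hpsi pa]] := specializable_ZS hchar ha nza.
have hT := hom_image_ZS hpsi.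
have [p [pp ltp [chi [hchi ca]]]] := reduce_mod_p N (hT _ ha) pa.
by exists p; split => //; exists (fun x => chi (psi x)); split => //; apply: hom_on_comp hchi hT.
Qed.

Lemma ring_hom_on_ZS_of (D : comNzRingType) (R : comNzRingType) (S : seq D) (phi : D -> R) :
  hom_on (in_ZS S) phi -> ring_hom_on_ZS S phi.
Proof.
move=> hphi; have sS := subring_ZS S.
by split; [exact: hom1 hphi | exact: homD hphi | exact: homN sS hphi | exact: homM hphi].
Qed.

Section WitnessProducts.
Variables (D : idomainType) (S : seq D) (n : nat).

Definition S_matrix (A : 'M['I_(size S)]_n) : 'M[D]_n := map_mx (fun i : 'I_(size S) => S`_i) A.

Definition det_product :=
  \prod_(A : 'M['I_(size S)]_n | \det (S_matrix A) != 0) \det (S_matrix A).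

Definition diff_product :=
  \prod_(i < size S) \prod_(j < size S | S`_i != S`_j) (S`_i - S`_j).

Let sS := subring_ZS S.
Let ZS_nth (i : 'I_(size S)) : in_ZS S S`_i.
Proof. by apply: in_ZS_mem; apply: mem_nth. Qed.

Lemma in_ZS_det_product : in_ZS S det_product.
Proof. by apply: (subring_prod sS) => A _; apply: (subring_det sS) => i j; rewrite mxE. Qed.

Lemma in_ZS_diff_product : in_ZS S diff_product.
Proof. by do 2![apply: (subring_prod sS) => ? _]; apply: (subringB sS). Qed.

Lemma det_product_neq0 : det_product != 0.
Proof. exact/prodf_neq0. Qed.

Lemma diff_product_neq0 : diff_product != 0.
Proof. by do 2!apply/prodf_neq0 => ? ?; rewrite subr_eq0. Qed.

Variables (R : comNzRingType) (phi : D -> R).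
Hypothesis hphi : hom_on (in_ZS S) phi.

Lemma hom_injective_on_S : phi diff_product != 0 -> {in S &, injective phi}.
Proof.
move=> pd s t hs ht e; apply/eqP/negPn/negP => nst; move/negP: pd; apply.
have [i ei] : exists i : 'I_(size S), S`_i = s.
  by exists (Ordinal (etrans (index_mem s S) hs)); rewrite /= nth_index.
have [j ej] : exists j : 'I_(size S), S`_j = t.
  by exists (Ordinal (etrans (index_mem t S) ht)); rewrite /= nth_index.
have ZSB (k l : 'I_(size S)) : in_ZS S (S`_k - S`_l) by apply: (subringB sS); apply: ZS_nth.
rewrite (hom_prod sS hphi) => [|k _]; last by apply: (subring_prod sS) => l _; apply: ZSB.
rewrite (bigD1 i) //= (hom_prod sS hphi) => [|l _]; last exact: ZSB.
rewrite (bigD1 j) /=; last by rewrite ei ej.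
by rewrite (homB sS hphi) // ei ej e subrr !mul0r.
Qed.

Lemma hom_preserves_det_vanishing : phi det_product != 0 ->
  forall M : 'M[D]_n, (forall i j, M i j \in S) ->
    (\det M == 0) = (\det (map_mx phi M) == 0).
Proof.
move=> pd M hM; have ZM i j : in_ZS S (M i j) by apply: in_ZS_mem.
rewrite -(hom_det sS hphi ZM).
have [-> | dnz] := eqVneq (\det M) 0; first by rewrite (hom0 sS hphi) eqxx.
apply/esym/negP => /eqP pdet; move/negP: pd; apply.
pose A : 'M['I_(size S)]_n := \matrix_(i, j) Ordinal (etrans (index_mem (M i j) S) (hM i j)).
have eA : S_matrix A = M by apply/matrixP => i j; rewrite !mxE /= nth_index.
rewrite (hom_prod sS hphi) => [|B _]; last by apply: (subring_det sS) => i j; rewrite mxE.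
by rewrite (bigD1 A) /= eA ?dnz // pdet mul0r.
Qed.

End WitnessProducts.

Theorem mainTheorem8 (D : idomainType) (hchar : [pchar D] =i pred0)
    (S : seq D) (n : nat) (hn : (0 < n)%N) :
  forall N : nat, exists p : nat,
    [/\ prime p, (N < p)%N &
      exists phi : D -> 'Z_p,
        [/\ ring_hom_on_ZS S phi,
            {in S &, injective phi} &
            forall M : 'M[D]_n, (forall i j, M i j \in S) ->
              (\det M == 0) = (\det (map_mx phi M) == 0)]].
Proof.
move=> N; have [ZSd ZSe] := (in_ZS_det_product (S := S) n, in_ZS_diff_product (S := S)).
have [p [pp ltp [phi [hphi]]]] := specialize_mod_p N hchar (subringM (subring_ZS S) ZSd ZSe)
  (mulf_neq0 (det_product_neq0 S n) (diff_product_neq0 S)).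
rewrite (homM hphi ZSd ZSe) => pa.
exists p; split => //; exists phi; split.
- exact: ring_hom_on_ZS_of.
- by apply: (hom_injective_on_S hphi); apply: contraNneq pa => ->; rewrite mulr0.
- by apply: (hom_preserves_det_vanishing hphi); apply: contraNneq pa => ->; rewrite mul0r.
Qed.
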